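(* Let $\alpha>0$, $g,h\in\mathbb{R}$ with $h>g$, $F_0\in(0,1)$, $X_0\in\mathbb{R}$, and define the quantile function $X:(0,1)\to\mathbb{R}$ by $$X(F)=X_0+\frac{1}{\alpha}\int_{F_0}^{F}\frac{d\xi}{\xi^g-\xi^h}.$$ Then: (i) if $g\geq 1$, $\lim_{F\to 0^+}X(F)=-\infty$ (infinite left tail); (ii) if $g<1$, $\lim_{F\to 0^+}X(F)$ is finite and equals $$X_0-\frac{F_0^{\lambda}}{\alpha\lambda}\left(1+\frac{\lambda F_0^{\gamma}}{\gamma}\,\Phi\!\left[F_0^{\gamma},1,1+\frac{\lambda}{\gamma}\right]\right),$$ where $\gamma=h-g$ and $\lambda=1-g$; (iii) for all such parameters, $\lim_{F\to 1^-}X(F)=+\infty$ (infinite right tail).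
   Context: Lerch's transcendent is $\Phi[z,s,v]=\sum_{n=0}^{\infty}\frac{z^n}{(v+n)^s}$ for $|z|<1$, $v\notin\{0,-1,-2,\dots\}$. The function $X(F)$ is the inverse of the S-distribution cumulative $F$ solving $dF/dX=\alpha(F^g-F^h)$, $F(X_0)=F_0$. *)

From Stdlib Require Import Reals.
From Coquelicot Require Import Coquelicot.
Open Scope R_scope.

(* Lerch transcendent Phi[z,s,v] = sum_{n>=0} z^n / (v+n)^s,
   used here for |z|<1 and v > 0 (so (v+n)^s = Rpower (v+n) s is the real power). *)
Definition LerchPhi (z s v : R) : R :=
  Series (fun n : nat => z ^ n / Rpower (v + INR n) s).

Definition Squantile (alpha g h F0 X0 : R) (F : R) : R :=
  X0 + / alpha * RInt (fun xi => / (Rpower xi g - Rpower xi h)) F0 F.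

From Stdlib Require Import Reals Lra.
From Coquelicot Require Import Coquelicot.
Open Scope R_scope.

(* The integrand 1/(x^g - x^h) is positive and continuous on (0,1).  For g >= 1 it
   dominates 1/x near 0, and since x^g - x^h vanishes linearly at 1 it dominates a
   multiple of 1/(1-x) near 1; comparing with the logarithmic primitives gives the
   two infinite tails.  For g < 1, with lambda = 1-g and gamma = h-g, the function
     H(x) = x^lambda P(x^gamma),   P(z) = sum_n z^n / (lambda + gamma n),
   is a primitive of the integrand, because P solves
   lambda P(z) + gamma z P'(z) = 1/(1-z).  As H(0+) = 0, the left limit is
   X0 - H(F0)/alpha, and P is expressed through Lerch's transcendent. *)

Lemma Rpower_pos x a : 0 < Rpower x a.
Proof. apply exp_pos. Qed.

Lemma Rpower_lt_base_lt1 x a b : 0 < x < 1 -> a < b -> Rpower x b < Rpower x a.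
Proof.
  intros Hx Hab. apply exp_increasing.
  assert (ln x < 0) by (rewrite <- ln_1; apply ln_increasing; lra).
  nra.
Qed.

Lemma Rpower_le_base_lt1 x a b : 0 < x < 1 -> a <= b -> Rpower x b <= Rpower x a.
Proof.
  intros Hx [Hab | <-]; [left; now apply Rpower_lt_base_lt1 | apply Rle_refl].
Qed.

Lemma Rabs_Rpower_lt_1 x c : 0 < x < 1 -> 0 < c -> Rabs (Rpower x c) < 1.
Proof.
  intros Hx Hc. pose proof (Rpower_lt_base_lt1 x 0 c Hx Hc).
  rewrite Rpower_O in * by lra. rewrite Rabs_right; [lra | left; apply Rpower_pos].
Qed.

Lemma exp_le_compat a b : a <= b -> exp a <= exp b.
Proof. intros [Hab | <-]; [left; now apply exp_increasing | apply Rle_refl]. Qed.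

Lemma Rpower_le_on_interval a x c : 0 < a -> a <= x <= 1 ->
  Rpower x c <= Rpower a c + 1.
Proof.
  intros Ha Hx.
  assert (ln a <= ln x) by (apply ln_le; lra).
  assert (ln x <= 0) by (rewrite <- ln_1; apply ln_le; lra).
  pose proof (Rpower_pos a c).
  destruct (Rle_dec 0 c).
  - assert (exp (c * ln x) <= exp 0) by (apply exp_le_compat; nra).
    rewrite exp_0 in *. unfold Rpower in *. lra.
  - assert (exp (c * ln x) <= exp (c * ln a)) by (apply exp_le_compat; nra).
    unfold Rpower in *. lra.
Qed.

Lemma one_minus_Rpower_le x c : 0 < x -> 0 <= c -> 1 - Rpower x c <= c * (/ x - 1).
Proof.
  intros Hx Hc.
  assert (Hexp : 1 + c * ln x <= Rpower x c) by apply exp_ineq1_le.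
  assert (Hln : 1 + ln (/ x) <= / x).
  { rewrite <- (exp_ln (/ x)) at 2 by (apply Rinv_0_lt_compat; lra). apply exp_ineq1_le. }
  rewrite ln_Rinv in Hln by lra.
  nra.
Qed.

Lemma RInt_ge_primitive (f phi G : R -> R) (a b : R) : a <= b ->
  (forall x, a <= x <= b -> is_derive G x (phi x)) ->
  (forall x, a <= x <= b -> continuous phi x) ->
  (forall x, a < x < b -> phi x <= f x) ->
  ex_RInt f a b ->
  G b - G a <= RInt f a b.
Proof.
  intros Hab HG Hphi Hle Hf.
  assert (HI : is_RInt phi a b (G b - G a)).
  { apply (is_RInt_derive G phi); rewrite Rmin_left, Rmax_right by lra; assumption. }
  rewrite <- (is_RInt_unique _ _ _ _ HI).
  apply RInt_le; [lra | now exists (G b - G a) | exact Hf | exact Hle].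
Qed.

Lemma Rmin_Rmax_between lo hi a b x : lo < a < hi -> lo < b < hi ->
  Rmin a b <= x <= Rmax a b -> lo < x < hi.
Proof.
  intros Ha Hb Hx. split.
  - eapply Rlt_le_trans; [|apply Hx]. apply Rmin_case; lra.
  - eapply Rle_lt_trans; [apply Hx|]. apply Rmax_case; lra.
Qed.

Lemma ball_R_between x e y : ball x e y -> x - e < y < x + e.
Proof.
  unfold ball; simpl; unfold AbsRing_ball, abs, minus, plus, opp; simpl.
  intros H. apply Rabs_lt_between in H. lra.
Qed.

Lemma at_right_interval x b : x < b -> at_right x (fun y => x < y < b).
Proof.
  intros Hxb. exists (mkposreal (b - x) ltac:(lra)).
  intros y Hy Hxy. apply ball_R_between in Hy. simpl in Hy. lra.
Qed.

Lemma at_left_interval a x : a < x -> at_left x (fun y => a < y < x).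
Proof.
  intros Hax. exists (mkposreal (x - a) ltac:(lra)).
  intros y Hy Hyx. apply ball_R_between in Hy. simpl in Hy. lra.
Qed.

Lemma filterlim_one_minus_at_left : filterlim (fun x => 1 - x) (at_left 1) (at_right 0).
Proof.
  intros P [eps HP]. exists eps. intros y Hy Hy1. apply HP; [|lra].
  apply ball_R_between in Hy.
  unfold ball; simpl; unfold AbsRing_ball, abs, minus, plus, opp; simpl.
  apply Rabs_lt_between. lra.
Qed.

Lemma filterlim_affine_ln_m_infty c k : 0 < k ->
  filterlim (fun y => c + k * ln y) (at_right 0) (Rbar_locally m_infty).
Proof.
  intros Hk.
  apply (filterlim_comp _ _ _ ln (fun y => c + k * y) _ (Rbar_locally m_infty));
    [exact is_lim_ln_0|].
  intros P [M HM]. exists ((M - c) / k). intros y Hy. apply HM.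
  assert (k * ((M - c) / k) = M - c) by (field; lra).
  nra.
Qed.

Lemma filterlim_affine_ln_p_infty c k : 0 < k ->
  filterlim (fun y => c - k * ln y) (at_right 0) (Rbar_locally p_infty).
Proof.
  intros Hk.
  apply (filterlim_comp _ _ _ ln (fun y => c - k * y) _ (Rbar_locally m_infty));
    [exact is_lim_ln_0|].
  intros P [M HM]. exists ((c - M) / k). intros y Hy. apply HM.
  assert (k * ((c - M) / k) = c - M) by (field; lra).
  nra.
Qed.

Lemma filterlim_Rpower_0 c : 0 < c ->
  filterlim (fun x => Rpower x c) (at_right 0) (locally 0).
Proof.
  intros Hc.
  apply (filterlim_ext (fun x => exp (0 + c * ln x))).
  { intros x. unfold Rpower. now rewrite Rplus_0_l. }
  apply (filterlim_comp _ _ _ (fun x => 0 + c * ln x) exp _ (Rbar_locally m_infty));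
    [now apply filterlim_affine_ln_m_infty | exact is_lim_exp_m].
Qed.

Definition Sdensity (g h x : R) : R := / (Rpower x g - Rpower x h).

Section Sdensity.

Variables g h : R.
Hypothesis Hgh : g < h.

Lemma Sdenom_pos x : 0 < x < 1 -> 0 < Rpower x g - Rpower x h.
Proof. intros Hx. pose proof (Rpower_lt_base_lt1 x g h Hx Hgh). lra. Qed.

Lemma continuous_Sdensity x : 0 < x < 1 -> continuous (Sdensity g h) x.
Proof.
  intros Hx. apply (ex_derive_continuous (K := R_AbsRing) (V := R_NormedModule)).
  pose proof (Sdenom_pos x Hx). unfold Sdensity, Rpower in *.
  auto_derive. repeat split; lra.
Qed.

Lemma ex_RInt_Sdensity a b : 0 < a < 1 -> 0 < b < 1 -> ex_RInt (Sdensity g h) a b.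
Proof.
  intros Ha Hb. apply (ex_RInt_continuous (V := R_CompleteNormedModule)).
  intros x Hx. now apply continuous_Sdensity, (Rmin_Rmax_between 0 1 a b).
Qed.

Lemma Sdensity_ge_inv x : 1 <= g -> 0 < x < 1 -> / x <= Sdensity g h x.
Proof.
  intros Hg Hx. apply Rinv_le_contravar; [now apply Sdenom_pos|].
  pose proof (Rpower_le_base_lt1 x 1 g Hx Hg). rewrite Rpower_1 in * by lra.
  pose proof (Rpower_pos x h). lra.
Qed.

(* [x^g - x^h] vanishes linearly at [x = 1]. *)
Lemma Sdensity_ge_inv_one_minus a : 0 < a < 1 ->
  exists K, 0 < K /\ forall x, a <= x < 1 -> / (K * (1 - x)) <= Sdensity g h x.
Proof.
  intros Ha. exists ((Rpower a (g - 1) + 1) * (h - g)).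
  pose proof (Rpower_pos a (g - 1)).
  split; [apply Rmult_lt_0_compat; lra|].
  intros x Hx. apply Rinv_le_contravar; [apply Sdenom_pos; lra|].
  assert (Hg : Rpower x g = Rpower x (g - 1) * x).
  { rewrite <- (Rpower_1 x) at 3 by lra. rewrite <- Rpower_plus. f_equal; ring. }
  assert (Hh : Rpower x h = Rpower x g * Rpower x (h - g)).
  { rewrite <- Rpower_plus. f_equal; ring. }
  assert (Hdiff := one_minus_Rpower_le x (h - g) ltac:(lra) ltac:(lra)).
  assert (Hbound := Rpower_le_on_interval a x (g - 1) ltac:(lra) ltac:(lra)).
  pose proof (Rpower_pos x (g - 1)).
  assert (Hinv : x * (/ x - 1) = 1 - x) by (field; lra).
  rewrite Hh, Hg.
  replace (Rpower x (g - 1) * x - Rpower x (g - 1) * x * Rpower x (h - g))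
    with (Rpower x (g - 1) * x * (1 - Rpower x (h - g))) by ring.
  apply Rle_trans with (Rpower x (g - 1) * x * ((h - g) * (/ x - 1))).
  - apply Rmult_le_compat_l; [nra | exact Hdiff].
  - replace (Rpower x (g - 1) * x * ((h - g) * (/ x - 1)))
      with (Rpower x (g - 1) * (h - g) * (x * (/ x - 1))) by ring.
    rewrite Hinv. apply Rmult_le_compat_r; [lra|].
    apply Rmult_le_compat_r; lra.
Qed.

End Sdensity.

Lemma Squantile_Sdensity alpha g h F0 X0 F :
  Squantile alpha g h F0 X0 F = X0 + / alpha * RInt (Sdensity g h) F0 F.
Proof. reflexivity. Qed.

Lemma Squantile_left_tail_infinite alpha g h F0 X0 :
  0 < alpha -> g < h -> 0 < F0 < 1 -> 1 <= g ->
  filterlim (Squantile alpha g h F0 X0) (at_right 0) (Rbar_locally m_infty).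
Proof.
  intros Halpha Hgh HF0 Hg.
  assert (Hk : 0 < / alpha) by (apply Rinv_0_lt_compat; lra).
  apply filterlim_le_m_infty with (f := fun F => (X0 - / alpha * ln F0) + / alpha * ln F);
    [|now apply filterlim_affine_ln_m_infty].
  apply (filter_imp (fun F => 0 < F < F0)); [|now apply at_right_interval].
  intros F HF.
  assert (Hln : ln F0 - ln F <= RInt (Sdensity g h) F F0).
  { apply (RInt_ge_primitive _ Rinv); [lra | | | | apply ex_RInt_Sdensity; lra].
    - intros x Hx. apply is_derive_ln. lra.
    - intros x Hx. apply (ex_derive_continuous (K := R_AbsRing) (V := R_NormedModule)).
      auto_derive. lra.
    - intros x Hx. apply Sdensity_ge_inv; lra. }
  assert (Hswap : RInt (Sdensity g h) F0 F = - RInt (Sdensity g h) F F0).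
  { rewrite <- opp_RInt_swap; [reflexivity | apply ex_RInt_Sdensity; lra]. }
  rewrite Squantile_Sdensity, Hswap. nra.
Qed.

Lemma Squantile_right_tail_infinite alpha g h F0 X0 :
  0 < alpha -> g < h -> 0 < F0 < 1 ->
  filterlim (Squantile alpha g h F0 X0) (at_left 1) (Rbar_locally p_infty).
Proof.
  intros Halpha Hgh HF0.
  destruct (Sdensity_ge_inv_one_minus g h Hgh F0 HF0) as [K [HK Hdens]].
  assert (Hk : 0 < / alpha / K)
    by (apply Rmult_lt_0_compat; apply Rinv_0_lt_compat; lra).
  set (c := X0 + / alpha / K * ln (1 - F0)).
  apply filterlim_ge_p_infty with (f := fun F => c - / alpha / K * ln (1 - F)).
  - apply (filter_imp (fun F => F0 < F < 1)); [|now apply at_left_interval].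
    intros F HF.
    assert (Hln : - ln (1 - F) / K - - ln (1 - F0) / K <= RInt (Sdensity g h) F0 F).
    { apply (RInt_ge_primitive _ (fun x => / (K * (1 - x))) (fun x => - ln (1 - x) / K));
        [lra | | | | apply ex_RInt_Sdensity; lra].
      - intros x Hx. auto_derive; [lra | field; lra].
      - intros x Hx. apply (ex_derive_continuous (K := R_AbsRing) (V := R_NormedModule)).
        auto_derive. apply Rgt_not_eq, Rmult_lt_0_compat; lra.
      - intros x Hx. apply Hdens. lra. }
    rewrite Squantile_Sdensity. unfold c.
    apply Rmult_le_compat_l with (r := / alpha) in Hln;
      [|left; apply Rinv_0_lt_compat; lra].
    replace (/ alpha * (- ln (1 - F) / K - - ln (1 - F0) / K))
      with (/ alpha / K * ln (1 - F0) - / alpha / K * ln (1 - F)) in Hln by (field; lra).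
    lra.
  - apply (filterlim_comp _ _ _ (fun F => 1 - F) (fun y => c - / alpha / K * ln y)
      _ (at_right 0));
      [exact filterlim_one_minus_at_left | now apply filterlim_affine_ln_p_infty].
Qed.

Lemma is_pseries_const_1 z : Rabs z < 1 -> is_pseries (fun _ => 1) z (/ (1 - z)).
Proof.
  intros Hz. eapply is_series_ext; [|now apply is_series_geom].
  intros n. unfold scal; simpl; unfold mult; simpl.
  rewrite Rmult_1_r. symmetry. apply pow_n_pow.
Qed.

Definition lerch_coef (lam gam : R) (n : nat) : R := / (lam + gam * INR n).

Section LerchSeries.

Variables lam gam : R.
Hypotheses (Hlam : 0 < lam) (Hgam : 0 < gam).

Lemma lerch_coef_den_pos n : 0 < lam + gam * INR n.
Proof. pose proof (pos_INR n). nra. Qed.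

Lemma CV_radius_lerch_coef z : Rabs z < 1 ->
  Rbar_lt (Rabs z) (CV_radius (lerch_coef lam gam)).
Proof.
  intros Hz.
  assert (H1 : Rbar_le 1 (CV_radius (lerch_coef lam gam))).
  { apply (proj1 (CV_radius_bounded _)). exists (/ lam). intros n.
    rewrite pow1, Rmult_1_r. pose proof (lerch_coef_den_pos n). pose proof (pos_INR n).
    unfold lerch_coef. rewrite Rabs_right by (left; apply Rinv_0_lt_compat; lra).
    apply Rinv_le_contravar; nra. }
  destruct (CV_radius (lerch_coef lam gam)); simpl in *; lra.
Qed.

(* Coefficientwise this is [(lam + gam n) / (lam + gam n) = 1]. *)
Lemma lerch_PSeries_equation z : Rabs z < 1 ->
  lam * PSeries (lerch_coef lam gam) z
    + gam * z * PSeries (PS_derive (lerch_coef lam gam)) z = / (1 - z).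
Proof.
  intros Hz. pose proof (CV_radius_lerch_coef z Hz) as Hr.
  assert (HP := PSeries_correct _ _ (CV_radius_inside _ _ Hr)).
  assert (HD := is_pseries_incr_1 _ _ _ (PSeries_correct _ _ (ex_pseries_derive _ _ Hr))).
  assert (Hsum := is_pseries_plus _ _ _ _ _
    (is_pseries_scal lam _ _ _ (Rmult_comm _ _) HP)
    (is_pseries_scal gam _ _ _ (Rmult_comm _ _) HD)).
  apply (is_pseries_ext _ (fun _ => 1)) in Hsum.
  - rewrite <- (is_pseries_unique _ _ _ (is_pseries_const_1 z Hz)),
      (is_pseries_unique _ _ _ Hsum).
    unfold plus, scal; simpl; unfold mult; simpl. ring.
  - intros [|n]; unfold PS_plus, PS_scal, PS_incr_1, PS_derive, lerch_coef;
      cbn -[INR].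
    + rewrite Rmult_0_r, Rplus_0_r. field. lra.
    + pose proof (lerch_coef_den_pos (S n)). field. lra.
Qed.

Lemma PSeries_lerch_coef z : Rabs z < 1 ->
  PSeries (lerch_coef lam gam) z = / lam + z / gam * LerchPhi z 1 (1 + lam / gam).
Proof.
  intros Hz.
  assert (Hex : ex_series (fun n => lerch_coef lam gam n * z ^ n)).
  { apply ex_series_Rabs, CV_disk_inside, CV_radius_lerch_coef, Hz. }
  unfold PSeries, LerchPhi. rewrite Series_incr_1 by exact Hex. rewrite <- Series_scal_l.
  f_equal.
  - unfold lerch_coef. simpl. field. lra.
  - apply Series_ext. intros n.
    assert (0 < lam / gam) by (apply Rdiv_lt_0_compat; lra).
    pose proof (pos_INR n).
    rewrite Rpower_1 by lra.
    unfold lerch_coef. rewrite S_INR. simpl. field. split; nra.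
Qed.

End LerchSeries.

Definition Sprimitive (g h x : R) : R :=
  Rpower x (1 - g) * PSeries (lerch_coef (1 - g) (h - g)) (Rpower x (h - g)).

Section Sprimitive.

Variables g h : R.
Hypotheses (Hg : g < 1) (Hgh : g < h).

Let a := lerch_coef (1 - g) (h - g).

Lemma is_derive_Sprimitive x : 0 < x < 1 -> is_derive (Sprimitive g h) x (Sdensity g h x).
Proof.
  intros Hx.
  set (z := Rpower x (h - g)).
  assert (Hz : Rabs z < 1) by (apply Rabs_Rpower_lt_1; lra).
  assert (Hr := CV_radius_lerch_coef (1 - g) (h - g) ltac:(lra) ltac:(lra) z Hz).
  assert (Hpow : forall c, is_derive (fun y => Rpower y c) x (c * Rpower x (c - 1)))
    by (intros c; apply is_derive_Reals, derivable_pt_lim_power; lra).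
  assert (HD := is_derive_mult _ _ _ _ _ (Hpow (1 - g))
    (is_derive_comp (PSeries a) (fun y => Rpower y (h - g)) x _ _
       (is_derive_PSeries a z Hr) (Hpow (h - g)))
    Rmult_comm).
  match type of HD with is_derive _ _ ?l => replace (Sdensity g h x) with l; [exact HD|] end.
  assert (Heq := lerch_PSeries_equation (1 - g) (h - g) ltac:(lra) ltac:(lra) z Hz).
  fold a in Heq.
  set (u := Rpower x g).
  assert (Hu : 0 < u) by apply Rpower_pos.
  assert (E1 : Rpower x (1 - g - 1) = / u).
  { unfold u. rewrite <- Rpower_Ropp. f_equal; ring. }
  assert (E2 : Rpower x (1 - g) * Rpower x (h - g - 1) = / u * z).
  { unfold u, z. rewrite <- Rpower_Ropp, <- !Rpower_plus. f_equal; ring. }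
  assert (E3 : Rpower x h = u * z).
  { unfold u, z. rewrite <- Rpower_plus. f_equal; ring. }
  assert (Hz1 : 0 < 1 - z) by (apply Rabs_lt_between in Hz; lra).
  unfold Sdensity. fold u. rewrite E3.
  cbn.
  rewrite E1. fold z.
  replace (Rpower x (1 - g) * ((h - g) * Rpower x (h - g - 1) * PSeries (PS_derive a) z))
    with ((h - g) * (Rpower x (1 - g) * Rpower x (h - g - 1)) * PSeries (PS_derive a) z)
    by ring.
  rewrite E2.
  replace ((1 - g) * / u * PSeries a z + (h - g) * (/ u * z) * PSeries (PS_derive a) z)
    with (/ u * ((1 - g) * PSeries a z + (h - g) * z * PSeries (PS_derive a) z)) by ring.
  rewrite Heq. field. split; nra.
Qed.

Lemma RInt_Sdensity u v : 0 < u < 1 -> 0 < v < 1 ->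
  RInt (Sdensity g h) u v = Sprimitive g h v - Sprimitive g h u.
Proof.
  intros Hu Hv.
  assert (Huv := Rmin_Rmax_between 0 1 u v).
  apply is_RInt_unique, (is_RInt_derive (Sprimitive g h) (Sdensity g h)).
  - intros x Hx. now apply is_derive_Sprimitive, Huv.
  - intros x Hx. now apply continuous_Sdensity, Huv.
Qed.

Lemma filterlim_Sprimitive_0 : filterlim (Sprimitive g h) (at_right 0) (locally 0).
Proof.
  assert (Hcont : filterlim (PSeries a) (locally 0) (locally (PSeries a 0))).
  { apply continuity_pt_filterlim, PSeries_continuity, CV_radius_lerch_coef;
      [lra | lra | rewrite Rabs_R0; lra]. }
  assert (Hseries : filterlim (fun x => PSeries a (Rpower x (h - g))) (at_right 0)
                      (locally (PSeries a 0))).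
  { apply (filterlim_comp _ _ _ (fun x => Rpower x (h - g)) (PSeries a) _ (locally 0));
      [apply filterlim_Rpower_0; lra | exact Hcont]. }
  assert (Hpow := filterlim_Rpower_0 (1 - g) ltac:(lra)).
  replace 0 with (mult 0 (PSeries a 0)) at 2 by (unfold mult; simpl; ring).
  apply (filterlim_comp_2 _ _ mult Hpow Hseries), (filterlim_mult (K := R_AbsRing)).
Qed.

Lemma Sprimitive_lerch x : 0 < x < 1 ->
  Sprimitive g h x = Rpower x (1 - g) *
    (/ (1 - g) + Rpower x (h - g) / (h - g) *
                 LerchPhi (Rpower x (h - g)) 1 (1 + (1 - g) / (h - g))).
Proof.
  intros Hx. unfold Sprimitive. rewrite PSeries_lerch_coef; [reflexivity | lra | lra |].
  apply Rabs_Rpower_lt_1; lra.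
Qed.

End Sprimitive.

Lemma Squantile_left_limit_finite alpha g h F0 X0 :
  g < 1 -> g < h -> 0 < F0 < 1 ->
  filterlim (Squantile alpha g h F0 X0) (at_right 0)
    (locally (X0 - / alpha * Sprimitive g h F0)).
Proof.
  intros Hg Hgh HF0.
  apply (filterlim_ext_loc (fun F => X0 + / alpha * (Sprimitive g h F - Sprimitive g h F0))).
  - apply (filter_imp (fun F => 0 < F < 1)); [|apply at_right_interval; lra].
    intros F HF. now rewrite Squantile_Sdensity, RInt_Sdensity.
  - replace (X0 - / alpha * Sprimitive g h F0)
      with (X0 + / alpha * (0 - Sprimitive g h F0)) by ring.
    apply (filterlim_comp _ _ _ (Sprimitive g h)
             (fun y => X0 + / alpha * (y - Sprimitive g h F0))
      _ (locally 0)); [now apply filterlim_Sprimitive_0|].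
    apply (ex_derive_continuous (K := R_AbsRing) (V := R_NormedModule)
             (fun y => X0 + / alpha * (y - Sprimitive g h F0))).
    auto_derive. exact I.
Qed.

Theorem mainTheorem4 (alpha g h F0 X0 : R)
  (Halpha : 0 < alpha) (Hgh : g < h) (HF0 : 0 < F0 < 1) :
  (1 <= g ->
     filterlim (Squantile alpha g h F0 X0) (at_right 0) (Rbar_locally m_infty)) /\
  (g < 1 ->
     let gamma := h - g in
     let lambda := 1 - g in
     filterlim (Squantile alpha g h F0 X0) (at_right 0)
       (locally (X0 - Rpower F0 lambda / (alpha * lambda) *
                  (1 + lambda * Rpower F0 gamma / gamma *
                       LerchPhi (Rpower F0 gamma) 1 (1 + lambda / gamma))))) /\
  filterlim (Squantile alpha g h F0 X0) (at_left 1) (Rbar_locally p_infty).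
Proof.
  split; [|split].
  - now apply Squantile_left_tail_infinite.
  - intros Hg gamma lambda.
    replace (X0 - _) with (X0 - / alpha * Sprimitive g h F0)
      by (rewrite Sprimitive_lerch by lra; unfold gamma, lambda; field; lra).
    now apply Squantile_left_limit_finite.
  - now apply Squantile_right_tail_infinite.
Qed.
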